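(* Let $u$ and $v$ be monomials and let $h_1,\dots,h_m\in\{x_1,\dots,x_n\}$. (i) If $\tilde p_{x_i,x_j}=1$ for all $x_i\in\mu(u)$ and all $x_j\in\mu(v)$, then $[u,v]=0$ in $\mathfrak{B}(V)$. (ii) If the monomial $h_1h_2\cdots h_m$ is disconnected, then $\sigma(h_1,\dots,h_m)=0$ for every full bracketing $\sigma$ of $h_1,\dots,h_m$ (in this order) by the bracket $[\,,\,]$. (iii) If $h_1h_2\cdots h_m\neq 0$ in $\mathfrak{B}(V)$ and $h_1h_2\cdots h_m$ is disconnected, then $h_1h_2\cdots h_m\notin\mathfrak{L}(V)$.
   Context: $F$ is an algebraically closed field of characteristic $0$. $V$ is a braided vector space of diagonal type with basis $x_1,\dots,x_n$ and braiding $C(x_i\otimes x_j)=q_{ij}x_j\otimes x_i$, $q_{ij}\in F^*$; $\mathfrak{B}(V)$ is its Nichols algebra, $\mathbb{Z}^n$-graded with $\deg x_i=e_i$. Let $\chi$ be the bicharacter of $\mathbb{Z}^n$ with $\chi(e_i,e_j)=q_{ij}$; put $p_{ij}:=q_{ij}$, $p_{uv}:=\chi(\deg u,\deg v)$ for homogeneous $u,v$, and $\tilde p_{x_i,x_j}:=p_{ij}p_{ji}$ (also for $i=j$). For homogeneous $x,y\in\mathfrak{B}(V)$ put $[x,y]:=yx-p_{yx}xy$; the Nichols braided Lie algebra $\mathfrak{L}(V)$ is the linear span in $\mathfrak{B}(V)$ of all iterated brackets (with any bracketing) of elements of $\{x_1,\dots,x_n\}$. A monomial is a word $u=h_1\cdots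 h_m$ ($m\ge1$, $h_j\in\{x_1,\dots,x_n\}$), also regarded as an element of $\mathfrak{B}(V)$; $\mu(u)$ is the set of letters occurring in the word. The pure generalized Dynkin graph $\Gamma(V)$ has vertex set $\{1,\dots,n\}$ and an edge $\{i,j\}$ ($i\neq j$) iff $p_{ij}p_{ji}\neq1$. A monomial $u$ is connected if the subgraph of $\Gamma(V)$ induced on $\{i: x_i\in\mu(u)\}$ is connected (a single vertex counts as connected), and disconnected otherwise. *)

(* Nichols algebra of diagonal type, modelled concretely:
   elements of the tensor algebra T(V) are formal linear combinations of words
   (seq of letters 'I_n); an element is zero in B(V) iff it lies in the kernel
   of the quantum symmetrizer (sum of the Matsumoto lifts T_sigma). *)
From HB Require Import structures.
From mathcomp Require Import all_boot all_order all_algebra all_fingroup.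
Set Implicit Arguments. Unset Strict Implicit. Unset Printing Implicit Defensive.
Import Order.TTheory GRing.Theory Num.Theory.
Local Open Scope ring_scope.

Section Nichols.
Variables (F : fieldType) (n : nat) (q : 'I_n -> 'I_n -> F).

Definition tens := seq (F * seq 'I_n)%type.

Definition mono (w : seq 'I_n) : tens := [:: (1, w)].
Definition tmul (a b : tens) : tens :=
  [seq (x.1 * y.1, x.2 ++ y.2) | x <- a, y <- b].
Definition tscale (c : F) (a : tens) : tens := [seq (c * x.1, x.2) | x <- a].
Definition tsub (a b : tens) : tens := a ++ tscale (-1) b.

Definition tcoef (a : tens) (w : seq 'I_n) : F :=
  \sum_(x <- a) (if x.2 == w then x.1 else 0).

(* T_sigma applied to the word w: letter at position k goes to position sigma k,
   with coefficient the product of q_{w_k w_l} over inversions k < l, sigma k > sigma l *)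
Definition Tcoef (w : seq 'I_n) (s : 'S_(size w)) : F :=
  \prod_(k : 'I_(size w))
     \prod_(l : 'I_(size w) | (k < l)%N && (s l < s k)%N)
        q (tnth (in_tuple w) k) (tnth (in_tuple w) l).
Definition Tword (w : seq 'I_n) (s : 'S_(size w)) : seq 'I_n :=
  [seq tnth (in_tuple w) ((s^-1)%g j) | j <- enum 'I_(size w)].

Definition omega_word (w : seq 'I_n) : tens :=
  [seq (Tcoef s, Tword s) | s <- enum 'S_(size w)].
Definition omega (a : tens) : tens :=
  flatten [seq tscale x.1 (omega_word x.2) | x <- a].

Definition bzero (a : tens) : Prop := forall w, tcoef (omega a) w = 0.

(* chi(deg s, deg t) for words / multisets of letters *)
Definition chi (s t : seq 'I_n) : F := \prod_(a <- s) \prod_(b <- t) q a b.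

Definition brk (x y : tens) (dx dy : seq 'I_n) : tens :=
  tsub (tmul y x) (tscale (chi dy dx) (tmul x y)).

Inductive btree := BLeaf of 'I_n | BNode of btree & btree.
Fixpoint leaves (t : btree) : seq 'I_n :=
  match t with BLeaf i => [:: i] | BNode l r => leaves l ++ leaves r end.
Fixpoint beval (t : btree) : tens :=
  match t with
  | BLeaf i => mono [:: i]
  | BNode l r => brk (beval l) (beval r) (leaves l) (leaves r)
  end.

Definition inL (a : tens) : Prop :=
  exists s : seq (F * btree)%type,
    bzero (tsub a (flatten [seq tscale c.1 (beval c.2) | c <- s])).

(* pure generalized Dynkin graph, restricted to the vertex set S *)
Definition dyn_edge (S : {set 'I_n}) : rel 'I_n :=
  fun i j => [&& i \in S, j \in S, i != j & q i j * q j i != 1].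
Definition connected_word (w : seq 'I_n) : bool :=
  let S := [set i | i \in w] in
  [forall i in S, forall j in S, connect (dyn_edge S) i j].
End Nichols.

From HB Require Import structures.
From mathcomp Require Import all_boot all_order all_algebra all_fingroup.
From mathcomp Require Import zify.
Set Implicit Arguments. Unset Strict Implicit. Unset Printing Implicit Defensive.
Import Order.TTheory GRing.Theory Num.Theory.
Local Open Scope ring_scope.

(* If q_ij q_ji = 1, reindexing the permutations of the quantum symmetrizer by
   the adjacent transposition shows that omega(L x_i x_j R) and
   q_ij omega(L x_j x_i R) have the same coefficients.  Hence two blocks of
   letters with pairwise trivial braiding commute up to chi inside any context
   L _ R, so [u, v] lies in the largest ideal of T(V) inside ker omega: this is
   (i).  At the root of a bracketing of a disconnected word, either a subtree is
   disconnected (induction, ideal property) or both subtrees are connected and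
   then have trivial mutual braiding.  For (iii), by the Z^n-grading only
   brackets over a permutation of h contribute to the coefficients of omega(h),
   and these vanish. *)

Lemma nth_cat_swap2 (T : Type) (x0 a b : T) L R k :
  k != size L -> k != (size L).+1 ->
  nth x0 (L ++ a :: b :: R) k = nth x0 (L ++ b :: a :: R) k.
Proof.
move=> kL kL1; rewrite !nth_cat; case: ltnP => // Lk.
by have -> : (k - size L = (k - size L - 2).+2)%N by lia.
Qed.

Lemma adj_ordF m (p p' : 'I_m) : val p' = (val p).+1 -> (p' == p) = false.
Proof. by move=> adj; rewrite -(inj_eq val_inj) adj (gtn_eqF (ltnSn _)). Qed.

Lemma ltn_tperm_adj m (p p' k l : 'I_m) : val p' = (val p).+1 ->
  (k, l) != (p, p') -> (k, l) != (p', p) ->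
  (tperm p p' k < tperm p p' l)%N = (k < l)%N.
Proof.
move=> adj; have p'p := adj_ordF adj.
have val_tperm x : val (tperm p p' x) =
    if x == p then val p' else if x == p' then val p else val x.
  by case: tpermP => [->|->|/eqP/negbTE-> /eqP/negbTE->]; rewrite ?eqxx ?p'p.
rewrite !xpair_eqE !val_tperm -!(inj_eq val_inj) adj.
by case: (val k =P val p); case: (val k =P (val p).+1);
  case: (val l =P val p); case: (val l =P (val p).+1) => /= *; lia.
Qed.

Section Nichols.
Variables (F : fieldType) (n : nat) (q : 'I_n -> 'I_n -> F).

Definition tlin (a : tens F n) (g : seq 'I_n -> F) : F :=
  \sum_(x <- a) x.1 * g x.2.

Lemma tlin_cat a b g : tlin (a ++ b) g = tlin a g + tlin b g.
Proof. by rewrite /tlin big_cat. Qed.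

Lemma tlin_scale c a g : tlin (tscale c a) g = c * tlin a g.
Proof.
by rewrite /tlin big_map mulr_sumr; apply: eq_bigr => x _; rewrite mulrA.
Qed.

Lemma tlin_sub a b g : tlin (tsub a b) g = tlin a g - tlin b g.
Proof. by rewrite tlin_cat tlin_scale mulN1r. Qed.

Lemma tlin_tmul a b g :
  tlin (tmul a b) g = \sum_(x <- a) \sum_(y <- b) x.1 * y.1 * g (x.2 ++ y.2).
Proof.
elim: a => [|x a IHa]; first by rewrite /tlin !big_nil.
by rewrite /tmul allpairs_cons tlin_cat big_cons -IHa /tlin big_map.
Qed.

Lemma tlin_mono w g : tlin (mono F w) g = g w.
Proof. by rewrite /tlin big_seq1 mul1r. Qed.

Definition omega_coef (z w : seq 'I_n) : F := tcoef (omega_word q w) z.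

Lemma tcoef_cat (a b : tens F n) w : tcoef (a ++ b) w = tcoef a w + tcoef b w.
Proof. by rewrite /tcoef big_cat. Qed.

Lemma tcoef_scale c (a : tens F n) w : tcoef (tscale c a) w = c * tcoef a w.
Proof.
rewrite /tcoef big_map mulr_sumr; apply: eq_bigr => x _ /=.
by case: ifP; rewrite ?mulr0.
Qed.

Lemma tcoef_omega a z : tcoef (omega q a) z = tlin a (omega_coef z).
Proof.
elim: a => [|x a IHa]; first by rewrite /tcoef /tlin !big_nil.
by rewrite /omega /= tcoef_cat tcoef_scale -/(omega q a) IHa /tlin big_cons.
Qed.

Lemma perm_Tword w (s : 'S_(size w)) : perm_eq (@Tword n w s) w.
Proof.
have tnth_w : [seq tnth (in_tuple w) i | i <- enum 'I_(size w)] = w.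
  exact: map_tnth_enum.
rewrite -[X in perm_eq _ X]tnth_w /Tword (map_comp (tnth _) s^-1%g).
apply: perm_map; apply: uniq_perm; rewrite ?enum_uniq //.
  by rewrite map_inj_uniq ?enum_uniq //; exact: perm_inj.
by move=> i; rewrite mem_enum; apply/mapP; exists (s i); rewrite ?mem_enum ?permK.
Qed.

Lemma omega_coef_eq0 z w : ~~ perm_eq w z -> omega_coef z w = 0.
Proof.
move=> not_wz; rewrite /omega_coef /tcoef /omega_word big_map big1 // => s _.
case: eqP => // Tword_z; case/negP: not_wz.
by rewrite -Tword_z perm_sym perm_Tword.
Qed.

(* [Tcoef] and [Tword] for the word whose letters are given by [f], so that
   swapping two letters is precomposition of [f] with a transposition. *)
Definition Tcoef_fun m (f : 'I_m -> 'I_n) (s : 'S_m) : F :=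
  \prod_(k : 'I_m) \prod_(l : 'I_m | (k < l)%N && (s l < s k)%N) q (f k) (f l).
Definition Tword_fun m (f : 'I_m -> 'I_n) (s : 'S_m) : seq 'I_n :=
  [seq f (s^-1%g j) | j <- enum 'I_m].
Definition omega_coef_fun m (f : 'I_m -> 'I_n) (z : seq 'I_n) : F :=
  \sum_(s : 'S_m) if Tword_fun f s == z then Tcoef_fun f s else 0.

Lemma eq_omega_coef_fun m (f g : 'I_m -> 'I_n) z :
  f =1 g -> omega_coef_fun f z = omega_coef_fun g z.
Proof.
move=> fg; apply: eq_bigr => s _; rewrite /Tword_fun /Tcoef_fun.
rewrite (eq_map (fun j => fg _)); case: eqP => // _.
by apply: eq_bigr => k _; apply: eq_bigr => l _; rewrite !fg.
Qed.

Lemma omega_coef_nth x0 z w m (f : 'I_m -> 'I_n) :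
  size w = m -> (forall k : 'I_m, f k = nth x0 w k) ->
  omega_coef z w = omega_coef_fun f z.
Proof.
move=> size_w; case: m / size_w in f * => f_nth.
rewrite /omega_coef /tcoef /omega_word big_map big_enum.
by apply: eq_omega_coef_fun => k; rewrite f_nth (tnth_nth x0).
Qed.

Definition Tfactor m (f : 'I_m -> 'I_n) (s : 'S_m) (k l : 'I_m) : F :=
  if (k < l)%N && (s l < s k)%N then q (f k) (f l) else 1.

Lemma Tcoef_fun_pairs m (f : 'I_m -> 'I_n) s :
  Tcoef_fun f s = \prod_(kl : 'I_m * 'I_m) Tfactor f s kl.1 kl.2.
Proof. by rewrite /Tcoef_fun pair_big_dep big_mkcond. Qed.

Lemma Tcoef_fun_tperm m (f : 'I_m -> 'I_n) (p p' : 'I_m) s :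
  val p' = (val p).+1 -> q (f p) (f p') * q (f p') (f p) = 1 ->
  Tcoef_fun f s = q (f p) (f p') * Tcoef_fun (f \o tperm p p') (tperm p p' * s).
Proof.
move=> adj qpp'; set t := tperm p p'.
have p'p := adj_ordF adj.
have pp' : (p, p') != (p', p) by rewrite xpair_eqE eq_sym p'p.
have tK x : t (t x) = x by rewrite /t tpermK.
have t_inj : injective (fun kl : 'I_m * 'I_m => (t kl.1, t kl.2)).
  by move=> [k l] [k' l'] [/perm_inj-> /perm_inj->].
rewrite !Tcoef_fun_pairs [X in _ = _ * X](reindex_inj t_inj) /=.
rewrite (bigD1 (p, p')) // (bigD1 (p', p)) 1?eq_sym //=.
rewrite [X in _ = _ * X](bigD1 (p, p')) // [X in _ = _ * (_ * X)](bigD1 (p', p)) 1?eq_sym //=.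
have -> : \prod_(kl | (kl != (p, p')) && (kl != (p', p)))
           Tfactor (f \o t) (t * s) (t kl.1) (t kl.2) =
         \prod_(kl | (kl != (p, p')) && (kl != (p', p))) Tfactor f s kl.1 kl.2.
  apply: eq_bigr => -[k l] /andP [klpp' klp'p].
  by rewrite /Tfactor /= !permM !tK /t ltn_tperm_adj.
have tp : t p = p' by rewrite /t tpermL.
have tp' : t p' = p by rewrite /t tpermR.
have ltpp' : (p < p')%N by rewrite adj.
have ltp'p : (p' < p)%N = false by rewrite adj ltnNge leqnSn.
rewrite /Tfactor /= !permM !tK tp tp' ltpp' ltp'p /=.
case: (ltngtP (s p') (s p)) => [_|_|/val_inj/perm_inj p'_p].
- by rewrite !mul1r.
- by rewrite !mul1r mulrA qpp' mul1r.
- by rewrite p'_p eqxx in p'p.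
Qed.

Lemma omega_coef_fun_tperm m (f : 'I_m -> 'I_n) (p p' : 'I_m) z :
  val p' = (val p).+1 -> q (f p) (f p') * q (f p') (f p) = 1 ->
  omega_coef_fun f z = q (f p) (f p') * omega_coef_fun (f \o tperm p p') z.
Proof.
move=> adj qpp'; rewrite /omega_coef_fun [X in _ = _ * X](reindex_inj (mulgI (tperm p p'))).
rewrite mulr_sumr; apply: eq_bigr => s _.
have -> : Tword_fun (f \o tperm p p') (tperm p p' * s) = Tword_fun f s.
  by apply: eq_map => j /=; rewrite invMg permM tpermV tpermK.
by case: eqP; rewrite ?mulr0 // (Tcoef_fun_tperm s adj qpp').
Qed.

Lemma omega_coef_swap z L (i j : 'I_n) R : q i j * q j i = 1 ->
  omega_coef z (L ++ i :: j :: R) = q i j * omega_coef z (L ++ j :: i :: R).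
Proof.
move=> qij; set w := L ++ i :: j :: R.
have lt_p'w : ((size L).+1 < size w)%N by rewrite size_cat /=; lia.
pose p : 'I_(size w) := Ordinal (ltnW lt_p'w); pose p' : 'I_(size w) := Ordinal lt_p'w.
have nth_L (a b : 'I_n) : nth i (L ++ a :: b :: R) (size L) = a.
  by rewrite nth_cat ltnn subnn.
have nth_L1 (a b : 'I_n) : nth i (L ++ a :: b :: R) (size L).+1 = b.
  by rewrite nth_cat ltnNge leqnSn /= subSn // subnn.
have tnth_swap k : tnth (in_tuple w) (tperm p p' k) = nth i (L ++ j :: i :: R) k.
  rewrite (tnth_nth i); case: tpermP => [->|->|kp kp'] /=; rewrite ?nth_L ?nth_L1 //.
  by apply: nth_cat_swap2; apply/eqP => k_eq; [apply: kp | apply: kp']; apply: val_inj.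
have -> : omega_coef z w = omega_coef_fun (tnth (in_tuple w)) z.
  by apply: (@omega_coef_nth i) => // k; rewrite (tnth_nth i).
have tnth_p : tnth (in_tuple w) p = i by rewrite (tnth_nth i) nth_L.
have tnth_p' : tnth (in_tuple w) p' = j by rewrite (tnth_nth i) nth_L1.
have := @omega_coef_fun_tperm _ (tnth (in_tuple w)) p p' z erefl.
rewrite tnth_p tnth_p' => -> //; congr (_ * _); symmetry.
by apply: (@omega_coef_nth i) => [|k]; rewrite ?size_cat //= tnth_swap.
Qed.

Lemma omega_coef_move_letter z L (i : 'I_n) u R :
    (forall j, j \in u -> q i j * q j i = 1) ->
  omega_coef z (L ++ i :: u ++ R) = (\prod_(j <- u) q i j) * omega_coef z (L ++ u ++ i :: R).
Proof.
elim: u L => [|j u IHu] L comm_iu; first by rewrite big_nil mul1r.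
rewrite /= omega_coef_swap ?comm_iu ?mem_head // -cat_rcons IHu.
  by rewrite cat_rcons big_cons mulrA.
by move=> k uk; rewrite comm_iu // inE uk orbT.
Qed.

Lemma omega_coef_swap_blocks z L v u R :
    (forall i j, i \in v -> j \in u -> q i j * q j i = 1) ->
  omega_coef z (L ++ v ++ u ++ R) = chi q v u * omega_coef z (L ++ u ++ v ++ R).
Proof.
elim: v L => [|i v IHv] L comm_vu; first by rewrite /chi big_nil mul1r.
rewrite cat_cons -cat_rcons IHv; last by move=> a b va ub; rewrite comm_vu // inE va orbT.
rewrite cat_rcons omega_coef_move_letter; last by move=> j uj; rewrite comm_vu ?mem_head.
by rewrite /chi big_cons mulrA [_ * \prod_(j <- u) _]mulrC.
Qed.

(* [bzero_ctx T] says that [L T R] is zero in B(V) for all words [L], [R]: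
   [T] lies in the largest two-sided ideal contained in the kernel of [omega]. *)
Definition bzero_ctx (T : tens F n) : Prop :=
  forall z L R, tlin T (fun w => omega_coef z (L ++ w ++ R)) = 0.

Lemma bzero_ctx_tlin T z : bzero_ctx T -> tlin T (omega_coef z) = 0.
Proof.
by move=> T0; rewrite -(T0 z [::] [::]) /tlin; apply: eq_bigr => x _; rewrite cats0.
Qed.

Lemma bzero_ctx_bzero T : bzero_ctx T -> bzero q T.
Proof. by move=> T0 z; rewrite tcoef_omega bzero_ctx_tlin. Qed.

Lemma bzero_ctx_sub a b : bzero_ctx a -> bzero_ctx b -> bzero_ctx (tsub a b).
Proof. by move=> a0 b0 z L R; rewrite tlin_sub a0 b0 subr0. Qed.

Lemma bzero_ctx_scale c a : bzero_ctx a -> bzero_ctx (tscale c a).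
Proof. by move=> a0 z L R; rewrite tlin_scale a0 mulr0. Qed.

Lemma bzero_ctx_mull a T : bzero_ctx T -> bzero_ctx (tmul a T).
Proof.
move=> T0 z L R; rewrite tlin_tmul big1 // => x _.
rewrite -[RHS](mulr0 x.1) -[X in _ = _ * X](T0 z (L ++ x.2) R) /tlin mulr_sumr.
by apply: eq_bigr => y _; rewrite mulrA !catA.
Qed.

Lemma bzero_ctx_mulr T a : bzero_ctx T -> bzero_ctx (tmul T a).
Proof.
move=> T0 z L R; rewrite tlin_tmul exchange_big big1 //= => y _.
rewrite -[RHS](mulr0 y.1) -[X in _ = _ * X](T0 z L (y.2 ++ R)) /tlin mulr_sumr.
by apply: eq_bigr => x _; rewrite mulrCA mulrA !catA.
Qed.

Definition homog (T : tens F n) (s : seq 'I_n) : Prop :=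
  forall x, x \in T -> perm_eq x.2 s.

Lemma homog_mono w : homog (mono F w) w.
Proof. by move=> x /[!inE] /eqP->. Qed.

Lemma homog_tmul a b s t : homog a s -> homog b t -> homog (tmul a b) (s ++ t).
Proof.
move=> ha hb x /allpairsP [[y y'] [/= ay by' ->]] /=.
by apply: perm_cat; [apply: ha | apply: hb].
Qed.

Lemma homog_tsub a b s : homog a s -> homog b s -> homog (tsub a b) s.
Proof.
move=> ha hb x; rewrite mem_cat => /orP [/ha //|/mapP [y /hb by_s ->]].
exact: by_s.
Qed.

Lemma homog_beval t : homog (beval q t) (leaves t).
Proof.
elim: t => [i|l IHl r IHr] /=; first exact: homog_mono.
apply: homog_tsub; last by move=> x /mapP [y /(homog_tmul IHl IHr) ? ->].
by move=> x /(homog_tmul IHr IHl) /perm_trans; apply; rewrite perm_catC.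
Qed.

Lemma chi_perm s s' t t' : perm_eq s s' -> perm_eq t t' -> chi q s t = chi q s' t'.
Proof.
move=> ss' tt'; rewrite /chi (perm_big _ ss'); apply: eq_bigr => a _.
exact: perm_big.
Qed.

Lemma bzero_ctx_brk T1 T2 s1 s2 : homog T1 s1 -> homog T2 s2 ->
    (forall i j, i \in s1 -> j \in s2 -> q i j * q j i = 1) ->
  bzero_ctx (brk q T1 T2 s1 s2).
Proof.
move=> h1 h2 comm z L R; rewrite /brk tlin_sub tlin_scale !tlin_tmul exchange_big /=.
apply/eqP; rewrite subr_eq0; apply/eqP.
rewrite mulr_sumr big_seq [RHS]big_seq; apply: eq_bigr => x T1x.
rewrite mulr_sumr big_seq [RHS]big_seq; apply: eq_bigr => y T2y.
rewrite catA -(catA L) -catA omega_coef_swap_blocks; last first.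
  move=> a b ya xb; rewrite mulrC comm //.
  - by rewrite -(perm_mem (h1 _ T1x)).
  - by rewrite -(perm_mem (h2 _ T2y)).
rewrite (chi_perm (h2 _ T2y) (h1 _ T1x)) !catA.
by rewrite mulrCA mulrA [y.1 * x.1]mulrC mulrA.
Qed.

Lemma connected_word1 (i : 'I_n) : connected_word q [:: i].
Proof.
by apply/'forall_implyP => a /[!inE] /eqP->; apply/'forall_implyP => b /[!inE] /eqP->.
Qed.

Lemma perm_connected_word s s' :
  perm_eq s s' -> connected_word q s = connected_word q s'.
Proof.
move=> ss'; rewrite /connected_word.
have -> // : [set i | i \in s] = [set i | i \in s'].
by apply/setP => i; rewrite !inE (perm_mem ss').
Qed.

Lemma connected_wordP w i j : connected_word q w -> i \in w -> j \in w ->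
  connect (dyn_edge q [set k | k \in w]) i j.
Proof.
move=> /'forall_implyP /(_ i) + wi wj; rewrite inE => /(_ wi) /'forall_implyP.
by apply; rewrite inE.
Qed.

Lemma connect_dyn_edge_subset (S S' : {set 'I_n}) i j : S \subset S' ->
  connect (dyn_edge q S) i j -> connect (dyn_edge q S') i j.
Proof.
move=> /subsetP SS'; apply: connect_sub => a b /and4P [Sa Sb ab qab].
by apply: connect1; rewrite /dyn_edge !SS' ?ab.
Qed.

Lemma connected_word_cat s1 s2 i j : connected_word q s1 -> connected_word q s2 ->
  i \in s1 -> j \in s2 -> q i j * q j i != 1 -> connected_word q (s1 ++ s2).
Proof.
move=> conn1 conn2 s1i s2j qij; set S := [set k | k \in s1 ++ s2].
have sym : connect_sym (dyn_edge q S).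
  apply: sym_connect_sym => a b; rewrite /dyn_edge mulrC eq_sym.
  by case: (a \in S); case: (b \in S).
have sub1 : [set k | k \in s1] \subset S by apply/subsetP => k; rewrite !inE mem_cat => ->.
have sub2 : [set k | k \in s2] \subset S.
  by apply/subsetP => k; rewrite !inE mem_cat orbC => ->.
have ij : connect (dyn_edge q S) i j.
  have [<-|nij] := eqVneq i j; first exact: connect0.
  by apply: connect1; rewrite /dyn_edge !inE !mem_cat s1i s2j orbT nij qij.
have from_i k : k \in S -> connect (dyn_edge q S) i k.
  rewrite inE mem_cat => /orP [s1k|s2k].
    exact: connect_dyn_edge_subset sub1 (connected_wordP conn1 s1i s1k).
  exact: connect_trans ij (connect_dyn_edge_subset sub2 (connected_wordP conn2 s2j s2k)).
apply/'forall_implyP => a Sa; apply/'forall_implyP => b Sb.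
by apply: connect_trans (from_i b Sb); rewrite sym; apply: from_i.
Qed.

Lemma bzero_ctx_beval t : ~~ connected_word q (leaves t) -> bzero_ctx (beval q t).
Proof.
elim: t => [i|l IHl r IHr] /=; first by rewrite connected_word1.
move=> disconn; rewrite /brk.
case conn_l: (connected_word q (leaves l)); last first.
  apply: bzero_ctx_sub; first by apply/bzero_ctx_mull/IHl; rewrite conn_l.
  by apply/bzero_ctx_scale/bzero_ctx_mulr/IHl; rewrite conn_l.
case conn_r: (connected_word q (leaves r)); last first.
  apply: bzero_ctx_sub; first by apply/bzero_ctx_mulr/IHr; rewrite conn_r.
  by apply/bzero_ctx_scale/bzero_ctx_mull/IHr; rewrite conn_r.
apply: bzero_ctx_brk; [exact: homog_beval | exact: homog_beval |].
move=> i j li rj; apply/eqP; apply: contraNT disconn => qij.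
exact: connected_word_cat conn_l conn_r li rj qij.
Qed.

Lemma tlin_beval_eq0 t h z : perm_eq h z -> ~~ connected_word q h ->
  tlin (beval q t) (omega_coef z) = 0.
Proof.
move=> hz disconn; have [th|not_th] := boolP (perm_eq (leaves t) h).
  by apply/bzero_ctx_tlin/bzero_ctx_beval; rewrite (perm_connected_word th).
rewrite /tlin big_seq big1 // => x tx; rewrite omega_coef_eq0 ?mulr0 //.
apply: contra not_th => xz; rewrite perm_sym in hz.
by apply: perm_trans (perm_trans xz hz); rewrite perm_sym homog_beval.
Qed.

Lemma bzero_mono_of_inL h : ~~ connected_word q h -> inL q (mono F h) -> bzero q (mono F h).
Proof.
move=> disconn [c h_comb] z; rewrite tcoef_omega tlin_mono.
have [hz|not_hz] := boolP (perm_eq h z); last exact: omega_coef_eq0.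
have comb0 : tlin (flatten [seq tscale x.1 (beval q x.2) | x <- c]) (omega_coef z) = 0.
  elim: c {h_comb} => [|x c IHc] /=; first by rewrite /tlin big_nil.
  by rewrite tlin_cat tlin_scale IHc (tlin_beval_eq0 _ hz disconn) mulr0 addr0.
by have := h_comb z; rewrite tcoef_omega tlin_sub tlin_mono comb0 subr0.
Qed.
End Nichols.

Theorem lemma2p2 (F : closedFieldType) (hchar : [pchar F] =i pred0)
    (n : nat) (q : 'I_n -> 'I_n -> F) (hq : forall i j, q i j != 0) :
  (* (i) *)
  (forall u v : seq 'I_n, u != [::] -> v != [::] ->
     (forall i j, i \in u -> j \in v -> q i j * q j i = 1) ->
     bzero q (brk q (mono F u) (mono F v) u v))
  /\
  (* (ii) *)
  (forall h : seq 'I_n, h != [::] -> ~~ connected_word q h ->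
     forall t : btree n, leaves t = h -> bzero q (beval q t))
  /\
  (* (iii) *)
  (forall h : seq 'I_n, h != [::] -> ~ bzero q (mono F h) ->
     ~~ connected_word q h -> ~ inL q (mono F h)).
Proof.
split; [|split].
- move=> u v _ _ comm; apply/bzero_ctx_bzero/bzero_ctx_brk => //; exact: homog_mono.
- by move=> h _ disconn t th; apply/bzero_ctx_bzero/bzero_ctx_beval; rewrite th.
- by move=> h _ nonzero disconn /(bzero_mono_of_inL disconn).
Qed.
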